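(* Let $G$ be a directed graph on $n$ vertices and let $u,v,x$ be vertices of $G$ such that the arc $\overrightarrow{uv}$ is not in $G$. Assume that adding the arc $\overrightarrow{uv}$ to $G$ decreases the cost of $u$ by $s$, where $s>n\operatorname{dist}(x,u)$. Then adding the arc $\overrightarrow{xv}$ to $G$ decreases the cost of $x$ by at least $s-n\operatorname{dist}(x,u)$.
   Context: For a directed graph $G$ on $n$ vertices, $U(G)$ is the undirected multigraph obtained by ignoring arc directions, and $\operatorname{dist}(a,b)$ is the distance between $a$ and $b$ in $U(G)$, defined to be $n^2$ if $a$ and $b$ lie in different connected components. The cost of a vertex $a$ is $c(a)=\sum_{w}\operatorname{dist}(a,w)$ (sum over all vertices $w$ of $G$). *)

From mathcomp Require Import all_boot all_order all_algebra.
Set Implicit Arguments. Unset Strict Implicit. Unset Printing Implicit Defensive.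

Definition digraph (n : nat) := rel 'I_n.

Definition adjU n (G : digraph n) : rel 'I_n := fun a b => G a b || G b a.

Definition has_walk n (G : digraph n) (k : nat) (a b : 'I_n) : bool :=
  [exists p : k.-tuple 'I_n, path (adjU G) a p && (last a p == b)].

(* Distance in U(G): the least k with a walk of length k (a shortest walk
   has at most n-1 edges, so searching k < n suffices); n^2 if none,
   i.e. if a and b lie in different components. *)
Definition dist n (G : digraph n) (a b : 'I_n) : nat :=
  if [seq k <- iota 0 n | has_walk G k a b] is k :: _ then k else n ^ 2.

Definition cost n (G : digraph n) (a : 'I_n) : nat := \sum_(w : 'I_n) dist G a w.

Definition add_arc n (G : digraph n) (a b : 'I_n) : digraph n :=
  fun x y => G x y || ((x == a) && (y == b)).

From mathcomp Require Import all_boot all_order all_algebra.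
From mathcomp Require Import zify.
Set Implicit Arguments. Unset Strict Implicit. Unset Printing Implicit Defensive.

(* If adding the arc u -> v shortens the distance from u to a vertex w, a
   shortest new walk uses the new arc, so its new length is at least
   dist(v, w) + 1; after adding x -> v, x reaches w in at most dist(v, w) + 1
   steps, while dist(u, w) <= dist(x, u) + dist(x, w). Hence the gain of u at w
   exceeds the gain of x at w by at most dist(x, u), and summing over the n
   vertices w gives the bound. *)

Lemma size_shorten (T : eqType) (x : T) (p : seq T) :
  size (shorten x p) <= size p.
Proof.
elim: p x => [|y p IHp] x //=.
by case: ifP => _; [apply: leq_trans (IHp x) _ | rewrite ltnS].
Qed.

Lemma filter_iota_head_le (P : pred nat) m r j :
  m <= j < m + r -> P j ->
  exists2 k, [seq i <- iota m r | P i] = k :: behead [seq i <- iota m r | P i]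
           & k <= j.
Proof.
elim: r m => [|r IHr] m; first by lia.
move=> j_range Pj /=; case: ifP => Pm; first by exists m => //; lia.
have m_neq_j : m != j by apply: contraFneq Pm => ->.
by apply: IHr => //; lia.
Qed.

Section Distance.
Variables (n : nat) (G : digraph n).

Lemma has_walkP k a b :
  reflect (exists p : seq 'I_n, [/\ size p = k, path (adjU G) a p & last a p = b])
          (has_walk G k a b).
Proof.
apply: (iffP existsP) => [[t /andP[t_path /eqP t_last]] | [p [p_size p_path p_last]]].
  by exists (val t); rewrite size_tuple.
have p_size' : size p == k by apply/eqP.
by exists (Tuple p_size'); rewrite /= p_path p_last eqxx.
Qed.

Lemma has_walk_sym k a b : has_walk G k a b -> has_walk G k b a.
Proof.
move=> /has_walkP [p [p_size p_path p_last]]; apply/has_walkP.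
exists (rev (belast a p)); split.
- by rewrite size_rev size_belast.
- by rewrite -p_last rev_path; apply: sub_path p_path => y z; rewrite /adjU orbC.
- by case: p {p_size p_path} p_last => [/= <-|y p _] //=; rewrite rev_cons last_rcons.
Qed.

Lemma has_walk_cat k l a b c :
  has_walk G k a b -> has_walk G l b c -> has_walk G (k + l) a c.
Proof.
move=> /has_walkP [p [p_size p_path p_last]] /has_walkP [q [q_size q_path q_last]].
apply/has_walkP; exists (p ++ q).
by rewrite size_cat last_cat cat_path p_size q_size p_last p_path q_path q_last.
Qed.

Lemma has_walk_shorten k a b :
  has_walk G k a b -> exists2 k', k' <= k & (k' < n) && has_walk G k' a b.
Proof.
move=> /has_walkP [p [<- p_path p_last]].
have shorten_le := size_shorten a p.
move: p_last shorten_le; case: (shortenP p_path) => p' p'_path p'_uniq _ <- p'_le.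
exists (size p') => //; apply/andP; split; last by apply/has_walkP; exists p'.
by have := max_card (mem (a :: p')); rewrite card_ord (card_uniqP p'_uniq).
Qed.

Lemma dist_cases a b :
  dist G a b = n ^ 2 \/ (dist G a b < n /\ has_walk G (dist G a b) a b).
Proof.
rewrite /dist; case def_ks: [seq k <- iota 0 n | has_walk G k a b] => [|k ks].
  by left.
right; have : k \in [seq k <- iota 0 n | has_walk G k a b] by rewrite def_ks mem_head.
by rewrite mem_filter mem_iota /= add0n => /andP[-> ->].
Qed.

Lemma dist_le_n2 a b : dist G a b <= n ^ 2.
Proof. by case: (dist_cases a b) => [->|[lt_dn _]] //; nia. Qed.

Lemma dist_le_walk k a b : has_walk G k a b -> dist G a b <= k.
Proof.
case/has_walk_shorten => k' le_k'k /andP[lt_k'n walk_k'].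
have k'_range : 0 <= k' < 0 + n by rewrite add0n lt_k'n.
rewrite /dist.
have [k0 -> le_k0k'] :=
  @filter_iota_head_le (fun j => has_walk G j a b) 0 n k' k'_range walk_k'.
exact: leq_trans le_k0k' le_k'k.
Qed.

Lemma distC a b : dist G a b = dist G b a.
Proof.
suff dist_le a' b' : dist G b' a' <= dist G a' b'.
  by apply/eqP; rewrite eqn_leq !dist_le.
case: (dist_cases a' b') => [->|[_ /has_walk_sym]]; first exact: dist_le_n2.
exact: dist_le_walk.
Qed.

Lemma dist_triangle a b c : dist G a c <= dist G a b + dist G b c.
Proof.
case: (dist_cases a b) => [->|[_ walk_ab]].
  exact: leq_trans (dist_le_n2 _ _) (leq_addr _ _).
case: (dist_cases b c) => [->|[_ walk_bc]].
  exact: leq_trans (dist_le_n2 _ _) (leq_addl _ _).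
exact/dist_le_walk/(has_walk_cat walk_ab walk_bc).
Qed.

End Distance.

Lemma dist_subrel n (G H : digraph n) a b :
  subrel G H -> dist H a b <= dist G a b.
Proof.
move=> sGH; case: (dist_cases G a b) => [->|[_ /has_walkP [p [p_size p_path p_last]]]].
  exact: dist_le_n2.
apply/dist_le_walk/has_walkP; exists p; split => //.
by apply: sub_path p_path => y z /orP[/sGH | /sGH]; rewrite /adjU => ->; rewrite ?orbT.
Qed.

Section AddArc.
Variables (n : nat) (G : digraph n) (a v : 'I_n).

Lemma dist_add_arc_le b c : dist (add_arc G a v) b c <= dist G b c.
Proof. by apply: dist_subrel => y z; rewrite /add_arc => ->. Qed.

Lemma dist_add_arc_le_succ w : dist (add_arc G a v) a w <= (dist G v w).+1.
Proof.
case: (dist_cases G v w) => [->|[_ /has_walkP [p [p_size p_path p_last]]]].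
  exact: leq_trans (dist_le_n2 _ _ _) (leqnSn _).
apply/dist_le_walk/has_walkP; exists (v :: p); split => //=; first by rewrite p_size.
rewrite {1}/adjU /add_arc !eqxx orbT /=.
by apply: sub_path p_path => y z; rewrite /adjU /add_arc => /orP[] ->; rewrite ?orbT.
Qed.

(* A walk in G + (a -> v) either avoids the new arc, or its part after the
   last use of the new arc is a shorter walk in G starting at a or v. *)
Lemma add_arc_walk_split b p :
  path (adjU (add_arc G a v)) b p ->
  has_walk G (size p) b (last b p) \/
  exists2 j, j < size p & has_walk G j a (last b p) || has_walk G j v (last b p).
Proof.
elim: p b => [|c p IHp] b /=; first by left; apply/has_walkP; exists [::].
case/andP=> adj_bc /IHp [walk_c | [j lt_jp walk_j]].
  2: by right; exists j; first exact: ltnW.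
case adjG_bc: (adjU G b c).
  left; apply: (has_walk_cat (k := 1)) walk_c.
  by apply/has_walkP; exists [:: c]; rewrite /= adjG_bc.
right; exists (size p) => //.
move/negbT: adjG_bc adj_bc => /norP[/negbTE Gbc /negbTE Gcb].
rewrite /adjU /add_arc Gbc Gcb /= => /orP[/andP[_ /eqP <-] | /andP[/eqP <- _]].
all: by rewrite walk_c ?orbT.
Qed.

Lemma dist_add_arc_lt w :
  dist (add_arc G a v) a w < dist G a w -> (dist G v w).+1 <= dist (add_arc G a v) a w.
Proof.
have := dist_le_n2 G a w.
case: (dist_cases (add_arc G a v) a w) => [-> | [_ /has_walkP [p [<- p_path <-]]]].
  by lia.
case: (add_arc_walk_split p_path) => [/dist_le_walk | [j lt_jp /orP[]/dist_le_walk]].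
all: by lia.
Qed.

End AddArc.

Section Gain.
Variables (n : nat) (G : digraph n) (u v x : 'I_n).

Lemma dist_add_arc_gain_le w :
  dist G u w + dist (add_arc G x v) x w <=
  dist G x w + dist (add_arc G u v) u w + dist G x u.
Proof.
have le_x := dist_add_arc_le G x v x w.
have le_x_succ := dist_add_arc_le_succ G x v w.
have le_u := dist_add_arc_le G u v u w.
have tri := dist_triangle G u x w; rewrite (distC G u x) in tri.
have [/dist_add_arc_lt|] := ltnP (dist (add_arc G u v) u w) (dist G u w); lia.
Qed.

Lemma cost_add_arc_gain_le :
  cost G u + cost (add_arc G x v) x <= cost G x + cost (add_arc G u v) u + n * dist G x u.
Proof.
rewrite /cost -!big_split -[n in n * _]card_ord -sum_nat_const -big_split /=.
by apply: leq_sum => w _; apply: dist_add_arc_gain_le.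
Qed.

End Gain.

Local Open Scope ring_scope.

Theorem mainTheorem16 (n : nat) (G : digraph n) (u v x : 'I_n) (s : int) :
  ~~ G u v ->
  (cost G u)%:Z - (cost (add_arc G u v) u)%:Z = s ->
  s > (n * dist G x u)%N%:Z ->
  (cost G x)%:Z - (cost (add_arc G x v) x)%:Z >= s - (n * dist G x u)%N%:Z.
Proof.
move=> _ <- _; have := cost_add_arc_gain_le G u v x; lia.
Qed.
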